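(* Let $\Omega\subset\mathbb R^d$ be a bounded Borel set, $f:\Omega\to[0,\infty)$ with $\int_\Omega f=1$, $p\ge1$, $x_1,x_2\in\Omega$, $h_1,h_2:[0,1]\to[0,\infty)$ continuous and non-decreasing, and $\kappa\in\mathbb N$, $\kappa\ge1$. Assume $G$ is strictly Lipschitz with constant $\kappa$, i.e. $|G(s)-G(t)|<\kappa|s-t|$ for all $s\ne t$. Let $t_1,\dots,t_\kappa\in\mathbb R$ be arbitrary and define for $n\ge\kappa$ $$t_{n+1}=\frac1\kappa\sum_{m=n-\kappa+1}^nG(t_m),$$ and for $n>\kappa$ let $\psi_n(x)=0$ if $\tau(x)<t_n$, $\psi_n(x)=1$ otherwise. Then $t_n\to\bar t$ and $\psi_n\to\bar\psi$ uniformly on every compact subset of $\Omega\setminus\{\tau=\bar t\}$.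
   Context: $\tau(x)=|x-x_1|^p-|x-x_2|^p$, $m(t)=\int_{\{x\in\Omega:\tau(x)<t\}}f\,dx$, $G(t)=h_2(1-m(t))-h_1(m(t))$. There is a unique $\bar t$ with $G(\bar t)=\bar t$, and $\bar\psi(x)=0$ if $\tau(x)<\bar t$, $\bar\psi(x)=1$ if $\tau(x)>\bar t$ (the unique equilibrium). *)

From HB Require Import structures.
From mathcomp Require Import all_boot all_order all_algebra.
From mathcomp Require Import all_classical all_reals all_analysis.
Set Implicit Arguments. Unset Strict Implicit. Unset Printing Implicit Defensive.
Import Order.TTheory GRing.Theory Num.Theory.
Import numFieldNormedType.Exports.
Local Open Scope classical_set_scope.
Local Open Scope ring_scope.

(* For measure theory we identify R^d with d.-tuple R, which carries the
   library product sigma-algebra (= Borel sigma-algebra of R^d). *)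
Definition tup2row {R : realType} {d : nat} (t : d.-tuple R) : 'rV[R]_d :=
  \row_i tnth t i.

(* Lebesgue integral over R^d of a function into \bar R, as the iterated
   one-dimensional Lebesgue integral (equal, by Tonelli, to the integral
   w.r.t. the d-dimensional Lebesgue measure for nonnegative measurable
   integrands, which is the only use below). *)
Fixpoint lebint_tuple {R : realType} (n : nat) : (n.-tuple R -> \bar R) -> \bar R :=
  match n with
  | 0 => fun g => g [tuple]
  | n'.+1 => fun g =>
      (\int[@lebesgue_measure R]_(x in [set: R])
         lebint_tuple (fun t : n'.-tuple R => g [tuple of x :: t]))%E
  end.

Definition lebint {R : realType} {d : nat} (g : 'rV[R]_d -> \bar R) : \bar R :=
  lebint_tuple (fun t : d.-tuple R => g (tup2row t)).

Definition enorm {R : realType} {d : nat} (x : 'rV[R]_d) : R :=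
  Num.sqrt (\sum_(i < d) x ord0 i ^+ 2).

Definition tau {R : realType} {d : nat} (p : R) (x1 x2 x : 'rV[R]_d) : R :=
  powR (enorm (x - x1)) p - powR (enorm (x - x2)) p.

Definition mass {R : realType} {d : nat} (Omega : set 'rV[R]_d) (f : 'rV[R]_d -> R)
  (p : R) (x1 x2 : 'rV[R]_d) (t : R) : R :=
  fine (lebint (fun x => ((\1_(Omega `&` [set y | tau p x1 x2 y < t]) x) * f x)%:E)).

Definition Gfun {R : realType} {d : nat} (Omega : set 'rV[R]_d) (f : 'rV[R]_d -> R)
  (p : R) (x1 x2 : 'rV[R]_d) (h1 h2 : R -> R) (t : R) : R :=
  h2 (1 - mass Omega f p x1 x2 t) - h1 (mass Omega f p x1 x2 t).

Definition psi_of {R : realType} {d : nat} (p : R) (x1 x2 : 'rV[R]_d) (t : R)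
  (x : 'rV[R]_d) : R :=
  if tau p x1 x2 x < t then 0 else 1.

(* the equilibrium psibar: 0 if tau < tbar, 1 if tau > tbar
   (value on {tau = tbar} irrelevant; set to 1) *)
Definition psibar {R : realType} {d : nat} (p : R) (x1 x2 : 'rV[R]_d) (tbar : R)
  (x : 'rV[R]_d) : R :=
  if tau p x1 x2 x < tbar then 0 else 1.

(* Let [Z n] be the partial sums of the deviations [G (t m) - tbar].  The
   averaging recursion turns into the delay equation
   [Z (n+1) = Z n + phi (Z n - Z (n-k))] with [phi x = G (tbar + x/k) - tbar],
   and [Z n - Z (n-k) = k (t (n+1) - tbar)].  Because G is nonincreasing and
   strictly k-Lipschitz, [x + phi x] is nondecreasing and has the sign of x, so
   [Z (n+1)] lies between [Z (n-k)] and [Z n]: the bounds of Z over a window of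
   k+1 consecutive indices propagate, and as long as the window is wide they
   move inwards by a definite amount every k+1 steps.  Hence
   [Z n - Z (n-k)] tends to 0, i.e. [t n] tends to [tbar].  On a compact set
   avoiding [tau = tbar] the continuous function tau stays a positive distance
   away from [tbar], so once [t n] is that close the sign of [tau - t n]
   agrees with that of [tau - tbar] and [psi_n = psibar] there. *)

From HB Require Import structures.
From mathcomp Require Import all_boot all_order all_algebra.
From mathcomp Require Import all_classical all_reals all_analysis.
From mathcomp Require Import lra zify ring.
Set Implicit Arguments. Unset Strict Implicit. Unset Printing Implicit Defensive.
Import Order.TTheory GRing.Theory Num.Theory.
Import numFieldNormedType.Exports.
Local Open Scope classical_set_scope.
Local Open Scope ring_scope.

Section WindowBounds.
Variables (R : realType) (k : nat) (Z : nat -> R).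

Definition window_lb n a := forall i, (n - k <= i <= n)%N -> a <= Z i.
Definition window_ub n b := forall i, (n - k <= i <= n)%N -> Z i <= b.

Lemma window_bounds n : exists a b, window_lb n a /\ window_ub n b.
Proof.
pose S := \sum_(i < n.+1) `|Z i|.
have ZS i : (i <= n)%N -> `|Z i| <= S.
  move=> ni; rewrite /S (bigD1 (Ordinal (ni : (i < n.+1)%N))) //= lerDl.
  exact: sumr_ge0.
by exists (- S), S; split=> i /andP[_ /ZS]; rewrite ler_norml => /andP[].
Qed.

End WindowBounds.

Lemma window_ub_lbN (R : realType) k (Z : nat -> R) n b :
  window_ub k Z n b <-> window_lb k (fun i => - Z i) n (- b).
Proof. by split=> w i /w; rewrite lerN2. Qed.

Section LowerWindow.
Variables (R : realType) (k : nat) (phi : R -> R) (Z : nat -> R).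
Hypothesis Z_rec : forall n, (k <= n)%N -> Z n.+1 = Z n + phi (Z n - Z (n - k)).
Hypothesis phi_ge0 : forall x, x <= 0 -> 0 <= phi x.
Hypothesis addr_phi_gt0 : forall x, 0 < x -> 0 < x + phi x.
Hypothesis addr_phi_homo : {homo (fun x => x + phi x) : x y / x <= y}.

Lemma lb_next n a : (k <= n)%N -> a <= Z n -> a <= Z (n - k) -> a <= Z n.+1.
Proof.
move=> kn an ank; rewrite Z_rec //.
have [x_le0|x_gt0] := lerP (Z n - Z (n - k)) 0.
  by have := phi_ge0 x_le0; lra.
by have := addr_phi_gt0 x_gt0; lra.
Qed.

Lemma window_lb_next n a : (k <= n)%N -> window_lb k Z n a -> window_lb k Z n.+1 a.
Proof.
move=> kn w i /andP[ki iSn]; have [iln|] := leqP i n.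
  by apply: w; rewrite iln andbT; lia.
move=> ni; have -> : i = n.+1 by lia.
by apply: lb_next => //; apply: w; lia.
Qed.

Lemma window_lb_shift n a j :
  (k <= n)%N -> window_lb k Z n a -> window_lb k Z (n + j) a.
Proof.
move=> kn w; elim: j => [|j IH]; first by rewrite addn0.
by rewrite addnS; apply: window_lb_next => //; lia.
Qed.

Definition lb_gain L := Num.min (L / 2) (L / 2 + phi (L / 2)).

Lemma lb_gain_gt0 L : 0 < L -> 0 < lb_gain L.
Proof.
by move=> L0; rewrite lt_min divr_gt0 //= addr_phi_gt0 // divr_gt0.
Qed.

Lemma lb_gain_le L : 0 <= L -> lb_gain L <= L.
Proof. by move=> L0; rewrite ge_min ler_pdivrMr //; lra. Qed.

(* With [x := Z n - Z (n - k)]: if [x >= L/2], then [Z n.+1 - Z (n - k)]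
   is [x + phi x >= L/2 + phi (L/2)]; if [x < L/2], then [Z (n - k)] is
   already above [a + L/2] and [Z n.+1] stays above it. *)
Lemma lb_gain_next n a L : (k <= n)%N -> 0 <= L ->
  a <= Z (n - k) -> a + L <= Z n -> a + lb_gain L <= Z n.+1.
Proof.
move=> kn L0 ank aLn; rewrite Z_rec //.
have gL2 : lb_gain L <= L / 2 by rewrite ge_min lexx.
have gphi : lb_gain L <= L / 2 + phi (L / 2) by rewrite ge_min lexx orbT.
have [x_le0|x_gt0] := lerP (Z n - Z (n - k)) 0; first by have := phi_ge0 x_le0; lra.
have := addr_phi_gt0 x_gt0.
have [xL|Lx] := ltrP (Z n - Z (n - k)) (L / 2); first lra.
by have := addr_phi_homo Lx; lra.
Qed.

Lemma iter_lb_gain_gt0 j L : 0 < L -> 0 < iter j lb_gain L.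
Proof. by move=> L0; elim: j => //= j; exact: lb_gain_gt0. Qed.

Lemma iter_lb_gain_le j L : 0 < L -> iter j lb_gain L <= L.
Proof.
move=> L0; elim: j => //= j IH.
by apply: le_trans IH; apply/lb_gain_le/ltW/iter_lb_gain_gt0.
Qed.

Lemma iter_lb_gain_next n a L j : (k <= n)%N -> 0 < L ->
  window_lb k Z n a -> a + L <= Z n -> a + iter j lb_gain L <= Z (n + j).
Proof.
move=> kn L0 w aLn; elim: j => [|j IH]; first by rewrite addn0.
rewrite addnS /=; apply: lb_gain_next => //; first by lia.
  exact/ltW/iter_lb_gain_gt0.
by apply: (@window_lb_shift n a j kn w); lia.
Qed.

Definition lb_raise L := iter k.+1 lb_gain L.

Lemma lb_raise_gt0 L : 0 < L -> 0 < lb_raise L.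
Proof. exact: iter_lb_gain_gt0. Qed.

Lemma window_lb_raise n a L : (k <= n)%N -> 0 < L ->
  window_lb k Z n a -> a + L <= Z n -> window_lb k Z (n + k.+1) (a + lb_raise L).
Proof.
move=> kn L0 w aLn i /andP[ni ink].
have -> : i = (n + (i - n))%N by lia.
apply: le_trans (iter_lb_gain_next _ kn L0 w aLn); rewrite lerD2l.
rewrite /lb_raise (_ : k.+1 = (k.+1 - (i - n)) + (i - n))%N; last by lia.
by rewrite iterD; apply/iter_lb_gain_le/iter_lb_gain_gt0.
Qed.

End LowerWindow.

Section DelayRecursion.
Variables (R : realType) (k : nat) (phi : R -> R) (Z : nat -> R).
Hypothesis Z_rec : forall n, (k <= n)%N -> Z n.+1 = Z n + phi (Z n - Z (n - k)).
Hypothesis phi_ge0 : forall x, x <= 0 -> 0 <= phi x.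
Hypothesis phi_le0 : forall x, 0 <= x -> phi x <= 0.
Hypothesis addr_phi_gt0 : forall x, 0 < x -> 0 < x + phi x.
Hypothesis addr_phi_lt0 : forall x, x < 0 -> x + phi x < 0.
Hypothesis addr_phi_homo : {homo (fun x => x + phi x) : x y / x <= y}.

Let phiN x := - phi (- x).
Let ZN n := - Z n.

Let ZN_rec n : (k <= n)%N -> ZN n.+1 = ZN n + phiN (ZN n - ZN (n - k)).
Proof. by move=> kn; rewrite /ZN /phiN Z_rec // opprD; congr (_ - phi _); ring. Qed.

Let phiN_ge0 x : x <= 0 -> 0 <= phiN x.
Proof. by move=> x0; rewrite oppr_ge0 phi_le0 // oppr_ge0. Qed.

Let addr_phiN_gt0 x : 0 < x -> 0 < x + phiN x.
Proof. by move=> x0; rewrite -oppr_lt0 opprD opprK addr_phi_lt0 // oppr_lt0. Qed.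

Let addr_phiN_homo : {homo (fun x => x + phiN x) : x y / x <= y}.
Proof.
by move=> x y xy; rewrite -lerN2 !opprD !opprK addr_phi_homo // lerN2.
Qed.

Lemma window_ub_shift n b j :
  (k <= n)%N -> window_ub k Z n b -> window_ub k Z (n + j) b.
Proof.
move=> kn /window_ub_lbN w; apply/window_ub_lbN.
exact (window_lb_shift ZN_rec phiN_ge0 addr_phiN_gt0 kn w).
Qed.

Definition ub_raise L := lb_raise k phiN L.

Lemma window_ub_lower n b L : (k <= n)%N -> 0 < L ->
  window_ub k Z n b -> Z n <= b - L -> window_ub k Z (n + k.+1) (b - ub_raise L).
Proof.
move=> kn L0 /window_ub_lbN w ZnbL; apply/window_ub_lbN; rewrite opprB addrC.
apply: (window_lb_raise ZN_rec phiN_ge0 addr_phiN_gt0 addr_phiN_homo kn L0 w).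
by rewrite /ZN; lra.
Qed.

Lemma window_gap_shrink ep : 0 < ep -> exists2 c, 0 < c &
  forall n a b, (k <= n)%N -> window_lb k Z n a -> window_ub k Z n b ->
  ep <= b - a -> exists a' b', [/\ window_lb k Z (n + k.+1) a',
    window_ub k Z (n + k.+1) b' & b' - a' <= b - a - c].
Proof.
move=> ep0; have ep2 : 0 < ep / 2 by rewrite divr_gt0.
have lb0 := lb_raise_gt0 k addr_phi_gt0 ep2.
have ub0 := lb_raise_gt0 k addr_phiN_gt0 ep2.
pose c := Num.min (lb_raise k phi (ep / 2)) (ub_raise (ep / 2)).
have c_lb : c <= lb_raise k phi (ep / 2) by rewrite ge_min lexx.
have c_ub : c <= ub_raise (ep / 2) by rewrite ge_min lexx orbT.
exists c; first by rewrite lt_min lb0 ub0.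
move=> n a b kn wa wb gap.
have [aZn|Znb] := lerP (a + ep / 2) (Z n).
  exists (a + lb_raise k phi (ep / 2)), b; split; last lra.
  - exact (window_lb_raise Z_rec phi_ge0 addr_phi_gt0 addr_phi_homo kn ep2 wa aZn).
  - exact (window_ub_shift kn wb).
exists a, (b - ub_raise (ep / 2)); split; last lra.
- exact (window_lb_shift Z_rec phi_ge0 addr_phi_gt0 kn wa).
- by apply: window_ub_lower => //; lra.
Qed.

Lemma window_gap_small ep : 0 < ep -> exists n a b,
  [/\ (k <= n)%N, window_lb k Z n a, window_ub k Z n b & b - a <= ep].
Proof.
move=> ep0; have [c c0 shrink] := window_gap_shrink ep0.
have [a0 [b0 [wa0 wb0]]] := window_bounds k Z k.
have gapN N : exists n a b, [/\ (k <= n)%N, window_lb k Z n a,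
    window_ub k Z n b & b - a <= Num.max ep (b0 - a0 - N%:R * c)].
  elim: N => [|N [n [a [b [kn wa wb gap]]]]].
    by exists k, a0, b0; split; rewrite // mul0r subr0 le_max lexx orbT.
  have [small|big] := lerP (b - a) ep.
    by exists n, a, b; split; rewrite // le_max small.
  have [a' [b' [wa' wb' gap']]] := shrink n a b kn wa wb (ltW big).
  exists (n + k.+1)%N, a', b'; split => //; first exact: leq_trans kn (leq_addr _ _).
  move: gap; rewrite le_max leNgt big /= => gap.
  by rewrite le_max -natr1 mulrDl mul1r; apply/orP; right; lra.
have [N NP] : exists N : nat, b0 - a0 < N%:R * c.
  exists (Num.Def.archi_bound `|(b0 - a0) / c|); rewrite -ltr_pdivrMr //.
  exact: le_lt_trans (ler_norm _) (archi_boundP (normr_ge0 _)).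
have [n [a [b [kn wa wb gap]]]] := gapN N.
exists n, a, b; split => //; move: gap; rewrite le_max => /orP[//|]; lra.
Qed.

Lemma delay_diff_cvg0 : (fun n => Z n - Z (n - k)) @ \oo --> 0.
Proof.
apply/cvgrPdist_le => ep ep0.
have [n0 [a [b [kn0 wa wb gap]]]] := window_gap_small ep0.
near=> n.
have n0n : (n0 <= n)%N by near: n; exists n0.
have := window_lb_shift Z_rec phi_ge0 addr_phi_gt0 (j := n - n0) kn0 wa.
have := window_ub_shift (j := n - n0) kn0 wb.
rewrite subnKC // => wbn wan.
have /andP[Zlb Zub] : a <= Z n <= b by rewrite wan ?wbn // leq_subr leqnn.
have /andP[Zlb' Zub'] : a <= Z (n - k) <= b by rewrite wan ?wbn // leqnn leq_subr.
rewrite sub0r normrN ler_norml; apply/andP; split; lra.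
Unshelve. all: by end_near.
Qed.

End DelayRecursion.

Section AveragingRecursion.
Variables (R : realType) (k : nat) (G : R -> R) (tbar : R) (t : nat -> R).
Hypothesis k_gt0 : (0 < k)%N.
Hypothesis G_lt : forall s u, s != u -> `|G s - G u| < k%:R * `|s - u|.
Hypothesis G_noninc : {homo G : s u /~ s <= u}.
Hypothesis G_fix : G tbar = tbar.
Hypothesis t_rec : forall n, (k <= n)%N ->
  t n.+1 = k%:R^-1 * \sum_(n - k + 1 <= m < n.+1) G (t m).

Let k_neq0 : k%:R != 0 :> R. Proof. by rewrite pnatr_eq0 -lt0n. Qed.

Let Z n := \sum_(0 <= m < n.+1) (G (t m) - tbar).
Let phi x := G (tbar + x / k%:R) - tbar.

Let Z_diff n : (k <= n)%N -> Z n - Z (n - k) = k%:R * (t n.+1 - tbar).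
Proof.
move=> kn; rewrite t_rec // /Z (@big_cat_nat _ _ _ (n - k + 1)) //=; last by lia.
rewrite addn1 addrC addrK sumrB sumr_const_nat.
have -> : (n.+1 - (n - k).+1 = k)%N by lia.
by rewrite mulrBr mulrA mulfV // mul1r mulr_natl.
Qed.

Let Z_rec n : (k <= n)%N -> Z n.+1 = Z n + phi (Z n - Z (n - k)).
Proof.
move=> kn; rewrite Z_diff // /phi /Z big_nat_recr //=.
by congr (_ + (G _ - _)); field.
Qed.

Let phi_sub x y : phi x - phi y = G (tbar + x / k%:R) - G (tbar + y / k%:R).
Proof. by rewrite /phi; ring. Qed.

Let sub_scale x y : x - y = k%:R * ((tbar + x / k%:R) - (tbar + y / k%:R)).
Proof. by field. Qed.

Let phi_contr x y : x != y -> `|phi x - phi y| < `|x - y|.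
Proof.
move=> xy; rewrite phi_sub [x - y]sub_scale normrM normr_nat; apply: G_lt.
by apply: contraNneq xy => /addrI /(mulIf (invr_neq0 k_neq0)) ->.
Qed.

Let phi_lip x y : `|phi x - phi y| <= `|x - y|.
Proof. by have [->|/phi_contr/ltW //] := eqVneq x y; rewrite !subrr. Qed.

Let phi_lt x : x != 0 -> `|phi x| < `|x|.
Proof.
have phi0 : phi 0 = 0 by rewrite /phi mul0r addr0 G_fix subrr.
by move=> /phi_contr; rewrite phi0 !subr0.
Qed.

Let phi_ge0 x : x <= 0 -> 0 <= phi x.
Proof.
move=> x0; rewrite subr_ge0 -{1}G_fix; apply: G_noninc.
by rewrite gerDl pmulr_lle0 // invr_gt0 ltr0n.
Qed.

Let phi_le0 x : 0 <= x -> phi x <= 0.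
Proof.
move=> x0; rewrite subr_le0 -{2}G_fix; apply: G_noninc.
by rewrite lerDl divr_ge0.
Qed.

Let addr_phi_gt0 x : 0 < x -> 0 < x + phi x.
Proof.
by move=> x0; have := phi_lt (lt0r_neq0 x0); rewrite (gtr0_norm x0) ltr_norml; lra.
Qed.

Let addr_phi_lt0 x : x < 0 -> x + phi x < 0.
Proof.
by move=> x0; have := phi_lt (ltr0_neq0 x0); rewrite (ltr0_norm x0) ltr_norml; lra.
Qed.

Let addr_phi_homo : {homo (fun x => x + phi x) : x y / x <= y}.
Proof.
move=> x y xy; have := phi_lip x y.
by rewrite [`|x - y|]distrC (@ger0_norm _ (y - x)) ?subr_ge0 // ler_norml; lra.
Qed.

Lemma averaging_recursion_cvg : t @ \oo --> tbar.
Proof.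
have /cvgrPdist_le dZ :=
  delay_diff_cvg0 Z_rec phi_ge0 phi_le0 addr_phi_gt0 addr_phi_lt0 addr_phi_homo.
have k_pos : 0 < k%:R :> R by rewrite ltr0n.
rewrite -cvg_shiftS; apply/cvgrPdist_le => ep ep0.
move: (dZ _ (mulr_gt0 k_pos ep0)); apply: filter_app; near=> n => dZn.
have kn : (k <= n)%N by near: n; exists k.
move: dZn; rewrite /= Z_diff // sub0r normrN normrM normr_nat ler_pM2l //.
by rewrite distrC.
Unshelve. all: by end_near.
Qed.

End AveragingRecursion.

(* Unlike [ge0_le_integral], no measurability is needed: compare the suprema
   over simple functions. *)
Lemma ge0_le_integralT (R : realType) (f g : R -> \bar R) :
  (forall x, (0 <= f x)%E) -> (forall x, (f x <= g x)%E) ->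
  (\int[@lebesgue_measure R]_(x in [set: R]) f x <=
   \int[@lebesgue_measure R]_(x in [set: R]) g x)%E.
Proof.
move=> f0 fg; have g0 x : (0 <= g x)%E by apply: le_trans (f0 x) (fg x).
rewrite !ge0_integralTE //; apply: ereal_sup_le => _ [h hf <-].
by exists h => // x; apply: le_trans (hf x) (fg x).
Qed.

Lemma lebint_tuple_ge0 (R : realType) n (g : n.-tuple R -> \bar R) :
  (forall x, (0 <= g x)%E) -> (0 <= lebint_tuple g)%E.
Proof.
elim: n g => [|n IH] g g0 /=; first exact: g0.
by apply: integral_ge0 => x _; apply: IH.
Qed.

Lemma le_lebint_tuple (R : realType) n (g1 g2 : n.-tuple R -> \bar R) :
  (forall x, (0 <= g1 x)%E) -> (forall x, (g1 x <= g2 x)%E) ->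
  (lebint_tuple g1 <= lebint_tuple g2)%E.
Proof.
elim: n g1 g2 => [|n IH] g1 g2 g10 g12 /=; first exact: g12.
apply: ge0_le_integralT => x; first by apply: lebint_tuple_ge0.
exact: IH.
Qed.

Section IndicatorProduct.
Variables (R : realType) (T : Type) (B : set T) (f : T -> R).
Hypothesis f_ge0 : forall x, B x -> 0 <= f x.

Lemma indic_mul_ge0 x : 0 <= \1_B x * f x.
Proof.
rewrite indicE; have [/set_mem/f_ge0|] := boolP (x \in B); first by rewrite mul1r.
by rewrite mul0r.
Qed.

Lemma le_indic_mul A x : A `<=` B -> \1_A x * f x <= \1_B x * f x.
Proof.
move=> AB; rewrite !indicE; have [xB|xB] := boolP (x \in B); last first.
  by rewrite (negbTE (contra (fun xA => mem_set (AB _ (set_mem xA))) xB)).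
rewrite mul1r; case: (x \in A); rewrite ?mul1r ?mul0r //; exact/f_ge0/set_mem.
Qed.

End IndicatorProduct.

Section Mass.
Variables (R : realType) (d : nat) (Omega : set 'rV[R]_d) (f : 'rV[R]_d -> R).
Variables (p : R) (x1 x2 : 'rV[R]_d).
Hypothesis f_ge0 : forall x, Omega x -> 0 <= f x.
Hypothesis f_int1 : lebint (fun x => ((\1_Omega x) * f x)%:E) = 1%E.

Let sublevel t := Omega `&` [set y | tau p x1 x2 y < t].
Let L t := lebint (fun x => ((\1_(sublevel t) x) * f x)%:E).

Let f_ge0_sublevel t x : sublevel t x -> 0 <= f x.
Proof. by case=> /f_ge0. Qed.

Let L_ge0 t : (0 <= L t)%E.
Proof.
apply: lebint_tuple_ge0 => y; rewrite lee_fin.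
exact: (indic_mul_ge0 (@f_ge0_sublevel t)).
Qed.

Let L_homo s t : s <= t -> (L s <= L t)%E.
Proof.
move=> st; apply: le_lebint_tuple => y; rewrite lee_fin.
  exact: (indic_mul_ge0 (@f_ge0_sublevel s)).
apply: (le_indic_mul (@f_ge0_sublevel t)) => z [Oz] /= zs.
by split=> //=; apply: lt_le_trans st.
Qed.

Let L_le1 t : (L t <= 1)%E.
Proof.
rewrite -f_int1; apply: le_lebint_tuple => y; rewrite lee_fin.
  exact: (indic_mul_ge0 (@f_ge0_sublevel t)).
apply: (le_indic_mul f_ge0); exact: subIsetl.
Qed.

Let L_fin t : L t \is a fin_num.
Proof. by rewrite ge0_fin_numE // (le_lt_trans (L_le1 t)) // ltry. Qed.

Lemma mass_ge0 t : 0 <= mass Omega f p x1 x2 t.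
Proof. exact/fine_ge0/L_ge0. Qed.

Lemma mass_le1 t : mass Omega f p x1 x2 t <= 1.
Proof. by rewrite -lee_fin /mass -/(L t) fineK. Qed.

Lemma mass_homo : {homo mass Omega f p x1 x2 : s t / s <= t}.
Proof. by move=> s t st; rewrite -lee_fin /mass -/(L s) -/(L t) !fineK // L_homo. Qed.

Lemma Gfun_noninc (h1 h2 : R -> R) :
  {in `[0, 1] &, {homo h1 : a b / a <= b}} ->
  {in `[0, 1] &, {homo h2 : a b / a <= b}} ->
  {homo Gfun Omega f p x1 x2 h1 h2 : s u /~ s <= u}.
Proof.
move=> h1_homo h2_homo s u su; rewrite /Gfun.
have m01 v : mass Omega f p x1 x2 v \in `[0, 1] by rewrite in_itv /= mass_ge0 mass_le1.
have m01C v : 1 - mass Omega f p x1 x2 v \in `[0, 1].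
  by rewrite in_itv /= subr_ge0 mass_le1 gerBl mass_ge0.
apply: lerB; last exact: h1_homo (mass_homo su).
by apply: h2_homo; rewrite ?lerB ?mass_homo.
Qed.

End Mass.

Lemma powR_norm_continuous (R : realType) (p : R) : 1 <= p ->
  continuous (fun a : R => `|a| `^ p).
Proof.
move=> p1 x; have p0 : p != 0 by rewrite gt_eqF // (lt_le_trans ltr01).
have [->|x0] := eqVneq x 0; last first.
  apply: (@continuous_comp _ _ _ (@Num.Def.normr R R) (fun a => a `^ p)).
    exact: norm_continuous.
  apply/differentiable_continuous/derivable1_diffP/derivable_powR.
  by rewrite in_itv /= normr_gt0 x0.
(* near 0, [|a| `^ p <= |a|] because [p >= 1] *)
apply/cvgrPdist_lt => e e0; rewrite /= normr0 powR0 //.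
near=> y; rewrite sub0r normrN ger0_norm ?powR_ge0 //.
have : `|0 - y| < Num.min e 1.
  by near: y; apply: cvgr_dist_lt; [exact: cvg_id | rewrite lt_min e0 ltr01].
rewrite sub0r normrN => y1.
have [->|y0] := eqVneq `|y| 0; first by rewrite powR0.
have y_lt1 : `|y| < 1 by apply: lt_le_trans y1 _; rewrite ge_min lexx orbT.
have y_lte : `|y| < e by apply: lt_le_trans y1 _; rewrite ge_min lexx.
have y01 : 0 < `|y| <= 1 by rewrite lt_neqAle eq_sym y0 normr_ge0 ltW.
exact: le_lt_trans (ge1r_powR y01 p1) y_lte.
Unshelve. all: by end_near.
Qed.

Lemma enorm_continuous (R : realType) d : continuous (@enorm R d).
Proof.
have sq_cont : continuous (fun x : 'rV[R]_d => \sum_(i < d) x ord0 i ^+ 2).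
  apply: continuous_big; first exact: add_continuous.
  move=> i _ /=; under eq_fun do rewrite expr2.
  by move=> y; apply: cvgM; try exact: coord_continuous; exact: nbhs_filter.
by move=> x; apply: continuous_comp; [exact: sq_cont | exact: sqrt_continuous].
Qed.

Lemma tau_continuous (R : realType) d (p : R) (x1 x2 : 'rV[R]_d) : 1 <= p ->
  continuous (tau p x1 x2).
Proof.
move=> p1; have dist_powR c : continuous (fun x : 'rV[R]_d => enorm (x - c) `^ p).
  have -> : (fun x : 'rV[R]_d => enorm (x - c) `^ p) =
      (fun a => `|a| `^ p) \o enorm \o (fun x => x - c).
    by apply: funext => x; rewrite /= ger0_norm // sqrtr_ge0.
  move=> x; apply: continuous_comp; first exact: cvgB cvg_id (cvg_cst c).
  apply: continuous_comp; first exact: enorm_continuous.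
  exact: powR_norm_continuous.
by move=> x; exact: cvgB (dist_powR x1 x) (dist_powR x2 x).
Qed.

Lemma compact_dist_gt0 (R : realType) (T : topologicalType) (g : T -> R) (K : set T) v :
  compact K -> continuous g -> (forall x, K x -> g x != v) ->
  exists2 c, 0 < c & forall x, K x -> c <= `|g x - v|.
Proof.
move=> cK g_cont Kg; have [[x0 Kx0]|K0] := pselect (K !=set0); last first.
  by exists 1 => // x Kx; case: K0; exists x.
have dist_cont : continuous (fun x => `|g x - v|).
  move=> x; apply: (@continuous_comp _ _ _ (fun x => g x - v) Num.norm).
    exact: cvgB (g_cont x) (cvg_cst v).
  exact: norm_continuous.
have [c Kc cmin] := compact_EVT_min (ex_intro _ x0 Kx0) cK (continuous_subspaceT dist_cont).
exists `|g c - v|; first by rewrite normr_gt0 subr_eq0 Kg // -inE.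
by move=> x Kx; apply: cmin; rewrite inE.
Qed.

Lemma psi_of_eq_psibar (R : realType) d (p : R) (x1 x2 x : 'rV[R]_d) s tbar :
  `|s - tbar| < `|tau p x1 x2 x - tbar| ->
  psi_of p x1 x2 s x = psibar p x1 x2 tbar x.
Proof.
rewrite /psi_of /psibar; move: (tau p x1 x2 x) => a.
have [a_lt|a_ge] := ltrP a tbar.
  by rewrite ltr_norml => /andP[lb _]; rewrite ifT //; lra.
rewrite ltr_norml => /andP[_ ub]; rewrite ifF //.
by apply/negbTE; rewrite -leNgt; lra.
Qed.

Theorem theorem5p14 (R : realType) (d : nat) (Omega : set 'rV[R]_d)
  (f : 'rV[R]_d -> R) (p : R) (x1 x2 : 'rV[R]_d) (h1 h2 : R -> R)
  (kappa : nat) (tbar : R) (t : nat -> R) :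
  (* Omega is a bounded Borel set *)
  measurable (tup2row @^-1` Omega) ->
  bounded_set Omega ->
  (* f : Omega -> [0, oo), measurable, int_Omega f = 1 *)
  (forall x, Omega x -> 0 <= f x) ->
  measurable_fun [set: d.-tuple R] (fun y => f (tup2row y)) ->
  lebint (fun x => ((\1_Omega x) * f x)%:E) = 1%E ->
  1 <= p ->
  Omega x1 -> Omega x2 ->
  (* h1, h2 : [0,1] -> [0,oo) continuous, non-decreasing *)
  {within `[0, 1], continuous h1} -> {within `[0, 1], continuous h2} ->
  {in `[0, 1] &, {homo h1 : a b / a <= b}} ->
  {in `[0, 1] &, {homo h2 : a b / a <= b}} ->
  (forall s, 0 <= s <= 1 -> 0 <= h1 s) ->
  (forall s, 0 <= s <= 1 -> 0 <= h2 s) ->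
  (1 <= kappa)%N ->
  (* G is strictly Lipschitz with constant kappa *)
  (forall s u, s != u ->
     `|Gfun Omega f p x1 x2 h1 h2 s - Gfun Omega f p x1 x2 h1 h2 u|
       < kappa%:R * `|s - u|) ->
  (* tbar is the (unique) fixed point of G *)
  Gfun Omega f p x1 x2 h1 h2 tbar = tbar ->
  (* t_1, ..., t_kappa arbitrary; recursion for n >= kappa *)
  (forall n, (kappa <= n)%N ->
     t n.+1 = kappa%:R^-1 *
       \sum_(n - kappa + 1 <= m < n.+1) Gfun Omega f p x1 x2 h1 h2 (t m)) ->
  t @ \oo --> tbar /\
  (forall K : set 'rV[R]_d, compact K -> K `<=` Omega ->
     (forall x, K x -> tau p x1 x2 x != tbar) ->
     forall eps : R, 0 < eps ->
       \forall n \near \oo, (kappa < n)%N /\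
         forall x, K x -> `|psi_of p x1 x2 (t n) x - psibar p x1 x2 tbar x| < eps).
Proof.
move=> _ _ f_ge0 _ f_int1 p1 _ _ _ _ h1_homo h2_homo _ _ k_gt0 G_lt G_fix t_rec.
have G_noninc := Gfun_noninc p x1 x2 f_ge0 f_int1 h1_homo h2_homo.
have t_cvg := averaging_recursion_cvg k_gt0 G_lt G_noninc G_fix t_rec.
split=> // K cK _ K_tau eps eps0.
have [c c0 c_le] := compact_dist_gt0 cK (tau_continuous p1) K_tau.
move/cvgrPdist_lt: t_cvg => /(_ c c0) t_near.
near=> n; split; first by near: n; exists kappa.+1.
move=> x Kx; rewrite (psi_of_eq_psibar (tbar := tbar)) ?subrr ?normr0 // distrC.
by apply: lt_le_trans (c_le x Kx); near: n.
Unshelve. all: by end_near.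
Qed.
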